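(* Let $K_1,\dots,K_N$ be kernels on $X\times X$, let $k\le N$, and let $\mathcal{K}=\{\sum_{i=1}^N w_iK_i:\ \sum_{i=1}^N w_i=1\ \text{and}\ \sum_{i=1}^N[w_i\neq 0]\le k\}$. Then \[ d_\phi(\mathcal{K})\leq 2k\log(k)+2k\log(4eN). \]
   Context: $[w_i\ne 0]$ is $1$ if $w_i\neq0$ and $0$ otherwise. For a class $\mathcal{K}$ of real functions on $X\times X$: $\mathcal{K}$ pseudo-shatters pairs $(x_1,x_1'),\dots,(x_r,x_r')$ if there exist thresholds $t_1,\dots,t_r$ such that for every $b\in\{-1,+1\}^r$ there is $K\in\mathcal{K}$ with $\mathrm{sign}(K(x_i,x_i')-t_i)=b_i$ for all $i$; the pseudodimension $d_\phi(\mathcal{K})$ is the largest $r$ such that some set of $r$ pairs is pseudo-shattered by $\mathcal{K}$. *)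

From Stdlib Require Import Reals List.
Import ListNotations.
Open Scope R_scope.

Definition rsum (N : nat) (f : nat -> R) : R :=
  fold_right Rplus 0 (map f (seq 0 N)).

Definition support_size (N : nat) (w : nat -> R) : nat :=
  length (filter (fun i => if Req_EM_T (w i) 0 then false else true) (seq 0 N)).

Definition kcomb {X : Type} (N : nat) (Ks : nat -> X -> X -> R) (w : nat -> R)
  : X -> X -> R :=
  fun x y => rsum N (fun i => w i * Ks i x y).

Definition sparse_class {X : Type} (N k : nat) (Ks : nat -> X -> X -> R)
  (K : X -> X -> R) : Prop :=
  exists w : nat -> R,
    rsum N w = 1 /\ (support_size N w <= k)%nat /\ K = kcomb N Ks w.

(* sign(z) = b for b in {-1,+1}, encoded by a bool (true = +1, false = -1) *)
Definition sign_is (z : R) (b : bool) : Prop :=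
  if b then 0 < z else z < 0.

Definition pseudo_shatters {X : Type} (C : (X -> X -> R) -> Prop)
  (r : nat) (pts : nat -> X * X) : Prop :=
  exists t : nat -> R,
    forall b : nat -> bool,
      exists K, C K /\
        forall i, (i < r)%nat -> sign_is (K (fst (pts i)) (snd (pts i)) - t i) (b i).

From Stdlib Require Import Reals Lra Lia.
From HB Require Import structures.
From mathcomp Require all_boot all_order all_algebra ring lra boolp Rstruct.
Open Scope R_scope.

(* Fix thresholds t witnessing the shattering.  A kernel of the class agrees on the r pairs
   with a combination of at most k of the K_i, so the vector of its values on the pairs
   minus t lies in one of at most N^k affine subspaces -t + V_g of R^r, where V_g is
   spanned by the k rows (K_(g l)(x_i, x_i'))_i.  An affine subspace of dimension d
   realises at most (q+1)^d sign patterns on q coordinates: the patterns of the last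
   q - 1 coordinates realised with both signs at the first one are also realised on the
   hyperplane where that coordinate vanishes, whose intersection with the subspace has
   dimension < d.  Shattering thus forces 2^r <= (N (r+1))^k, and taking logarithms with
   ln (r+1) <= (r+1)/(8k) + ln (8k) - 1 gives the bound. *)

Module Shattering.
Import all_boot all_order all_algebra ring lra boolp Rstruct.
Set Implicit Arguments. Unset Strict Implicit. Unset Printing Implicit Defensive.
Import Order.TTheory GRing.Theory Num.Theory.
Local Open Scope ring_scope.

Lemma leq_exp2rW a b e : (a <= b)%N -> (a ^ e <= b ^ e)%N.
Proof. by case: e => // e; rewrite leq_exp2r. Qed.

Lemma leq_expn_add q d e : (e < d)%N -> (q.+1 ^ d + q.+1 ^ e <= q.+2 ^ d)%N.
Proof.
case: d => // d; rewrite ltnS => le_ed.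
have -> : (q.+2 ^ d.+1 = q.+2 ^ d + q.+1 * q.+2 ^ d)%N by rewrite expnS mulSn.
rewrite expnS addnC leq_add ?leq_mul ?leq_exp2rW //.
by rewrite (leq_trans (leq_pexp2l _ le_ed)) ?leq_exp2rW.
Qed.

Lemma leq_card_bigcup (I T : finType) (A : I -> {set T}) :
  (#|\bigcup_i A i| <= \sum_i #|A i|)%N.
Proof.
elim/big_rec2: _ => [|i n S _ IH]; first by rewrite cards0.
by rewrite (leq_trans (leq_card_setU _ _)) ?leq_add2l.
Qed.

Section SignPatterns.
Variable F : realFieldType.

Definition sgn (z : F) (b : bool) : bool := if b then 0 < z else z < 0.

Lemma sgn_between (y1 y2 l : F) s : 0 < l -> l < 1 ->
  sgn y1 s -> sgn y2 s -> sgn (y1 + l * (y2 - y1)) s.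
Proof.
move=> l0 l1; have l1' : 0 < 1 - l by rewrite subr_gt0.
case: s => /= h1 h2.
  have -> : y1 + l * (y2 - y1) = (1 - l) * y1 + l * y2 by ring.
  by rewrite addr_gt0 ?mulr_gt0.
have -> : y1 + l * (y2 - y1) = - ((1 - l) * - y1 + l * - y2) by ring.
by rewrite oppr_lt0 addr_gt0 ?mulr_gt0 ?oppr_gt0.
Qed.

Lemma submxB m1 m2 n (A B : 'M[F]_(m1, n)) (C : 'M[F]_(m2, n)) :
  (A <= C)%MS -> (B <= C)%MS -> (A - B <= C)%MS.
Proof. by move=> sAC sBC; rewrite addmx_sub // -scaleN1r scalemx_sub. Qed.

Definition coord_hyperplane n (j : 'I_n) : 'M[F]_n := kermx (delta_mx j (0 : 'I_1)).

Lemma sub_coord_hyperplane n (j : 'I_n) (v : 'rV[F]_n) :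
  (v <= coord_hyperplane j)%MS = (v 0 j == 0).
Proof.
rewrite sub_kermx -colE; apply/eqP/eqP => [/(congr1 (fun M : 'M_1 => M 0 0))|vj0].
  by rewrite !mxE.
by apply/matrixP => a c; rewrite !mxE !ord1.
Qed.

Lemma rank_cap_coord_hyperplane m n (U : 'M[F]_(m, n)) (j : 'I_n) (v : 'rV[F]_n) :
  (v <= U)%MS -> v 0 j != 0 -> (\rank (U :&: coord_hyperplane j)%MS < \rank U)%N.
Proof.
move=> svU vj; apply: rank_ltmx; rewrite ltmxE capmxSl /=; apply: contra vj => sUH.
rewrite -sub_coord_hyperplane; apply: submx_trans (capmxSr U _).
exact: submx_trans sUH.
Qed.

Definition realizes n m (U : 'M[F]_(m, n)) (p : 'rV[F]_n) q (idx : q.-tuple 'I_n)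
  (b : q.-tuple bool) : Prop :=
  exists2 v : 'rV[F]_n, (v <= U)%MS & forall i, sgn ((p + v) 0 (tnth idx i)) (tnth b i).

Definition sign_patterns n m (U : 'M[F]_(m, n)) (p : 'rV[F]_n) q (idx : q.-tuple 'I_n)
  : {set q.-tuple bool} := [set b | `[< realizes U p idx b >]].

Section ConsCoordinate.
Variables (n m q : nat) (U : 'M[F]_(m, n)) (p : 'rV[F]_n) (j : 'I_n) (idx : q.-tuple 'I_n).

Lemma realizes_cons (s : bool) (b : q.-tuple bool) :
  realizes U p [tuple of j :: idx] [tuple of s :: b] <->
  exists2 v : 'rV[F]_n, (v <= U)%MS &
    sgn ((p + v) 0 j) s /\ forall i, sgn ((p + v) 0 (tnth idx i)) (tnth b i).
Proof.
split=> [[v svU hv]|[v svU [hj hv]]]; exists v => //.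
  by split=> [|i]; [have := hv ord0 | have := hv (lift ord0 i)]; rewrite ?tnth0 ?tnthS.
by move=> i; case: (unliftP ord0 i) => [i'|] ->; rewrite ?tnth0 ?tnthS.
Qed.

Definition head_patterns (s : bool) : {set q.-tuple bool} :=
  [set b : q.-tuple bool | [tuple of s :: b] \in sign_patterns U p [tuple of j :: idx]].

Lemma card_sign_patterns_cons :
  (#|sign_patterns U p [tuple of j :: idx]| <=
    #|head_patterns true :|: head_patterns false| +
    #|head_patterns true :&: head_patterns false|)%N.
Proof.
rewrite cardsUI.
pose push s (b : q.-tuple bool) := [tuple of s :: b].
have sub_push : sign_patterns U p [tuple of j :: idx] \subset
                push true @: head_patterns true :|: push false @: head_patterns false.
  apply/subsetP => b; case/tupleP: b => [[] b] Pb; rewrite inE;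
    apply/orP; [left|right]; by apply/imsetP; exists b; rewrite // inE.
rewrite (leq_trans (subset_leq_card sub_push)) // (leq_trans (leq_card_setU _ _)) //.
by rewrite leq_add ?leq_imset_card.
Qed.

Lemma head_patterns_sub s : head_patterns s \subset sign_patterns U p idx.
Proof.
apply/subsetP => b; rewrite !inE => /asboolP/realizes_cons[v svU [_ hv]].
by apply/asboolP; exists v.
Qed.

Lemma common_head_pattern_on_hyperplane b :
  b \in head_patterns true :&: head_patterns false ->
  exists2 v : 'rV[F]_n, (v <= U)%MS &
    (p + v) 0 j = 0 /\ forall i, sgn ((p + v) 0 (tnth idx i)) (tnth b i).
Proof.
rewrite !inE => /andP[/asboolP/realizes_cons[v1 sv1U [/= hj1 hv1]]
                      /asboolP/realizes_cons[v2 sv2U [/= hj2 hv2]]].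
set a := (p + v1) 0 j in hj1; set c := (p + v2) 0 j in hj2.
have ac : 0 < a - c by rewrite subr_gt0 (lt_trans hj2 hj1).
set l := a / (a - c).
have l0 : 0 < l by rewrite divr_gt0.
have l1 : l < 1 by rewrite ltr_pdivrMr // mul1r; lra.
have pvE i : (p + (v1 + l *: (v2 - v1))) 0 i =
             (p + v1) 0 i + l * ((p + v2) 0 i - (p + v1) 0 i) by rewrite !mxE; ring.
exists (v1 + l *: (v2 - v1)); first by rewrite addmx_sub ?scalemx_sub ?submxB.
split=> [|i]; rewrite pvE; last exact: sgn_between.
by rewrite -/a -/c /l; field; rewrite lt0r_neq0.
Qed.

Lemma common_head_patterns_sub v0 : (v0 <= U)%MS -> (p + v0) 0 j = 0 ->
  head_patterns true :&: head_patterns false \subset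
  sign_patterns (U :&: coord_hyperplane j)%MS (p + v0) idx.
Proof.
move=> sv0U hj0; apply/subsetP => b /common_head_pattern_on_hyperplane[v svU [hj hv]].
rewrite inE; apply/asboolP; exists (v - v0).
  rewrite sub_capmx submxB // sub_coord_hyperplane.
  by move: hj hj0; rewrite !mxE => hj hj0; apply/eqP; lra.
by rewrite -addrA [v0 + _]addrC subrK.
Qed.

Lemma common_head_pattern_rank b : b \in head_patterns true :&: head_patterns false ->
  (\rank (U :&: coord_hyperplane j)%MS < \rank U)%N.
Proof.
rewrite !inE => /andP[/asboolP/realizes_cons[v1 sv1U [/= hj1 _]]
                      /asboolP/realizes_cons[v2 sv2U [/= hj2 _]]].
apply: (@rank_cap_coord_hyperplane _ _ _ _ (v1 - v2)); first exact: submxB.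
by rewrite !mxE subr_eq0; apply: contraTneq (lt_trans hj2 hj1) => e; rewrite !mxE e ltxx.
Qed.

End ConsCoordinate.

Lemma card_sign_patterns n q (idx : q.-tuple 'I_n) m (U : 'M[F]_(m, n)) p :
  (#|sign_patterns U p idx| <= q.+1 ^ \rank U)%N.
Proof.
elim: q idx m U p => [|q IH] idx m U p.
  by rewrite exp1n (leq_trans (max_card _)) // card_tuple.
case/tupleP: idx => j idx.
apply: leq_trans (card_sign_patterns_cons U p j idx) _.
set T := head_patterns U p j idx true; set F' := head_patterns U p j idx false.
have card_tails : (#|T :|: F'| <= q.+1 ^ \rank U)%N.
  by rewrite (leq_trans _ (IH idx m U p)) // subset_leq_card // subUset !head_patterns_sub.
case: (set_0Vmem (T :&: F')) => [->|[b hb]].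
  by rewrite cards0 addn0 (leq_trans card_tails) ?leq_exp2rW.
have [v0 sv0U [hj0 _]] := common_head_pattern_on_hyperplane hb.
have card_common :=
  leq_trans (subset_leq_card (common_head_patterns_sub idx sv0U hj0)) (IH idx _ _ _).
exact: leq_trans (leq_add card_tails card_common) (leq_expn_add _ (common_head_pattern_rank hb)).
Qed.

End SignPatterns.

Lemma foldr_Rplus_big (f : nat -> R) (s : seq nat) :
  List.fold_right Rplus 0%R (List.map f s) = \sum_(i <- s) f i.
Proof. by elim: s => [|i s IH] /=; rewrite ?big_nil // big_cons IH. Qed.

Lemma rsumE N (f : nat -> R) : rsum N f = \sum_(i <- iota 0 N) f i.
Proof. exact: foldr_Rplus_big. Qed.

Lemma support_sizeE N (w : nat -> R) :
  support_size N w = size [seq i <- iota 0 N | w i != 0].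
Proof.
rewrite /support_size; congr size; change (List.seq 0 N) with (iota 0 N).
by elim: (iota 0 N) => //= i s ->; case: Req_dec_T => [->|/eqP/negPf->]; rewrite ?eqxx.
Qed.

Lemma sign_is_sgn (z : R) (b : bool) : sign_is z b -> sgn z b.
Proof. by case: b => /= /RltP. Qed.

Lemma rsum_sparse N k (w : nat -> R) : (support_size N.+1 w <= k)%coq_nat ->
  exists (g : {ffun 'I_k -> 'I_N.+1}) (c : 'rV[R]_k),
    forall f : nat -> R, rsum N.+1 (fun i => w i * f i) = \sum_(l < k) c 0 l * f (g l).
Proof.
rewrite support_sizeE => /ssrnat.leP; set s := filter _ _ => size_s.
have lt_s l : (l < size s)%N -> (nth 0%N s l < N.+1)%N.
  by move=> /(mem_nth 0%N); rewrite mem_filter mem_iota => /andP[_].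
exists [ffun l : 'I_k => inord (nth 0%N s l)].
exists (\row_l if (l < size s)%N then w (nth 0%N s l) else 0) => f.
rewrite rsumE (bigID (fun i => w i != 0)) /= [X in _ + X]big1 => [|i /negPn/eqP->]; last first.
  by rewrite mul0r.
rewrite addr0 -big_filter -/s (big_nth 0%N) big_mkord.
rewrite (big_ord_widen k (fun i => w (nth 0%N s i) * f (nth 0%N s i)) size_s) big_mkcond /=.
by apply: eq_bigr => l _; rewrite !mxE ffunE; case: ifP => [/lt_s/inordK->|]; rewrite ?mul0r.
Qed.

Definition kernel_matrix (X : Type) N k r (Ks : nat -> X -> X -> R) (pts : nat -> X * X)
  (g : {ffun 'I_k -> 'I_N}) : 'M[R]_(k, r) :=
  \matrix_(l, i) Ks (g l) (pts i).1 (pts i).2.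

Lemma pseudo_shatters_sign_patterns (X : Type) N k r (Ks : nat -> X -> X -> R)
    (pts : nat -> X * X) :
  pseudo_shatters (sparse_class N.+1 k Ks) r pts ->
  exists p : 'rV[R]_r, [set: r.-tuple bool] \subset
    \bigcup_(g : {ffun 'I_k -> 'I_N.+1}) sign_patterns (kernel_matrix r Ks pts g) p (ord_tuple r).
Proof.
case=> t shattered; exists (\row_i - t i); apply/subsetP => b _.
have [K [[w [_ [supp_w ->]]] sign_K]] := shattered (nth false b).
have [g [c kcombE]] := rsum_sparse supp_w.
apply/bigcupP; exists g => //; rewrite inE; apply/asboolP.
exists (c *m kernel_matrix r Ks pts g); first exact: submxMl.
move=> i; rewrite tnth_ord_tuple (tnth_nth false).
have := sign_is_sgn (sign_K i (ssrnat.ltP (ltn_ord i))); congr (sgn _ _).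
by rewrite /kcomb kcombE !mxE addrC; congr (_ + _); apply: eq_bigr => l _; rewrite mxE.
Qed.

Lemma card_pseudo_shattered (X : Type) N k r (Ks : nat -> X -> X -> R) (pts : nat -> X * X) :
  pseudo_shatters (sparse_class N.+1 k Ks) r pts -> (2 ^ r <= (N.+1 * r.+1) ^ k)%N.
Proof.
move=> /pseudo_shatters_sign_patterns[p cover].
have card_g : #|{ffun 'I_k -> 'I_N.+1}| = (N.+1 ^ k)%N by rewrite card_ffun !card_ord.
rewrite -[2%N]card_bool -card_tuple -cardsT expnMn -card_g -sum_nat_const.
apply: leq_trans (subset_leq_card cover) _; apply: leq_trans (leq_card_bigcup _) _.
apply: leq_sum => g _; apply: leq_trans (card_sign_patterns _ _ _) _.
by rewrite leq_pexp2l ?rank_leq_row.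
Qed.

End Shattering.

Lemma ln_le x y : 0 < x -> x <= y -> ln x <= ln y.
Proof. intros x_gt0 [lt_xy | <-]; [left; apply ln_increasing | right]; auto. Qed.

Lemma ln_le_linear y c : 0 < y -> 0 < c -> ln y <= y / c + ln c - 1.
Proof.
  intros y_gt0 c_gt0.
  assert (yc_gt0 : 0 < y / c) by (apply Rdiv_lt_0_compat; auto).
  assert (ln_y : ln y = ln (y / c) + ln c).
  { unfold Rdiv; rewrite ln_mult, ln_Rinv by (auto with real); ring. }
  pose proof (exp_ineq1_le (ln (y / c))) as exp_ge; rewrite exp_ln in exp_ge by auto.
  lra.
Qed.

Lemma ln2_ge_5_8 : 5 / 8 <= ln 2.
Proof.
  assert (ln_e5 : ln (exp 1 ^ 5) = 5).
  { rewrite ln_pow, ln_exp by apply exp_pos; simpl; ring. }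
  assert (ln_256 : ln (2 ^ 8) = 8 * ln 2) by (rewrite ln_pow by lra; simpl; ring).
  assert (e5_le : exp 1 ^ 5 <= 2 ^ 8).
  { apply Rle_trans with (3 ^ 5); [| simpl; lra].
    apply pow_incr; split; [left; apply exp_pos | apply exp_le_3]. }
  apply ln_le in e5_le; [lra | apply pow_lt, exp_pos].
Qed.

Lemma bound_of_log_growth (k : nat) (n x : R) : 1 <= n -> 0 <= x ->
  x * ln 2 <= INR k * (ln n + ln (x + 1)) ->
  x <= 2 * INR k * ln (INR k) + 2 * INR k * ln (4 * exp 1 * n).
Proof.
  intros n_ge1 x_ge0 growth.
  pose proof ln2_ge_5_8 as L_ge.
  destruct k as [|k]; [simpl in growth |- *; nra|].
  set (kk := INR (S k)) in *.
  assert (kk_ge1 : 1 <= kk) by (apply (le_INR 1); lia).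
  assert (A_ge0 : 0 <= ln n) by (rewrite <- ln_1; apply ln_le; lra).
  assert (B_ge0 : 0 <= ln kk) by (rewrite <- ln_1; apply ln_le; lra).
  assert (ln_8kk : ln (8 * kk) = 3 * ln 2 + ln kk).
  { replace 8 with (2 * 2 * 2) by lra; rewrite !ln_mult by lra; ring. }
  assert (ln_4en : ln (4 * exp 1 * n) = 2 * ln 2 + 1 + ln n).
  { pose proof (exp_pos 1).
    replace 4 with (2 * 2) by lra; rewrite !ln_mult, ln_exp by nra; ring. }
  (* Choosing the scale 8k in ln y <= y/c + ln c - 1 leaves slope ln 2 - 1/8 >= 1/2 on the left. *)
  assert (ln_x1 := ln_le_linear (x + 1) (8 * kk) ltac:(lra) ltac:(lra)).
  rewrite ln_8kk in ln_x1.
  assert (kk_ln_x1 : kk * ln (x + 1) <= (x + 1) / 8 + kk * (3 * ln 2 + ln kk - 1)).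
  { replace ((x + 1) / 8) with (kk * ((x + 1) / (8 * kk))) by (field; lra).
    rewrite <- Rmult_plus_distr_l; apply Rmult_le_compat_l; lra. }
  rewrite ln_4en.
  set (L := ln 2) in *; set (A := ln n) in *; set (B := ln kk) in *.
  apply (Rmult_le_reg_r (L - 1 / 8)); [lra|].
  apply Rle_trans with (kk * A + 1 / 8 + kk * (3 * L + B - 1)); [nra|].
  assert (0 <= kk * B * (2 * L - 5 / 4)) by (apply Rmult_le_pos; [apply Rmult_le_pos|]; lra).
  assert (0 <= kk * A * (2 * L - 5 / 4)) by (apply Rmult_le_pos; [apply Rmult_le_pos|]; lra).
  assert (0 <= (kk - 1) * (4 * L * L - 3 / 2 * L + 3 / 4)) by (apply Rmult_le_pos; nra).
  nra.
Qed.

Lemma expn_pow (m e : nat) : ssrnat.expn m e = Nat.pow m e.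
Proof.
  induction e as [|e IH]; [reflexivity|].
  rewrite ssrnat.expnS, IH; reflexivity.
Qed.

Lemma log_growth (N r k : nat) : (0 < N)%nat -> (2 ^ r <= (N * S r) ^ k)%nat ->
  INR r * ln 2 <= INR k * (ln (INR N) + ln (INR r + 1)).
Proof.
  intros N_gt0 growth.
  assert (N_pos : 0 < INR N) by (apply lt_0_INR; exact N_gt0).
  assert (r1_pos : 0 < INR r + 1) by (pose proof (pos_INR r); lra).
  apply le_INR in growth; rewrite !pow_INR, mult_INR, (S_INR r) in growth.
  replace (INR 2) with 2 in growth by (simpl; lra).
  assert (base_pos : 0 < INR N * (INR r + 1)) by (apply Rmult_lt_0_compat; lra).
  apply ln_le in growth; [| apply pow_lt; lra].
  rewrite !ln_pow, ln_mult in growth by lra; exact growth.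
Qed.

Theorem lemma4 (X : Type) (N k : nat) (Ks : nat -> X -> X -> R)
  (hk : (k <= N)%nat) :
  forall (r : nat) (pts : nat -> X * X),
    pseudo_shatters (sparse_class N k Ks) r pts ->
    INR r <= 2 * INR k * ln (INR k) + 2 * INR k * ln (4 * exp 1 * INR N).
Proof.
  intros r pts shattered.
  destruct N as [|N].
  - destruct shattered as [t shattered].
    destruct (shattered (fun _ => true)) as [K [[w [sum_w _]] _]].
    unfold rsum in sum_w; simpl in sum_w; lra.
  - pose proof (Shattering.card_pseudo_shattered shattered) as growth.
    apply (Bool.reflect_iff _ _ (ssrnat.leP)) in growth.
    rewrite !expn_pow in growth.
    apply bound_of_log_growth.
    + apply (le_INR 1); lia.
    + apply pos_INR.
    + apply log_growth; [lia | exact growth].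
Qed.
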